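(* Consider a cellular network with $n$ base stations $\mathcal{N}=\{1,\dots,n\}$, where base station $i$ serves a nonempty set $\mathcal{J}_i$ of users (pairwise disjoint sets), with channel gains $g_{kj}>0$ from base station $k$ to user $j$ and noise power $\sigma^2>0$. For $\mathbf{p}>\mathbf{0}$, $\mathbf{x}\ge\mathbf{0}$, $\mathbf{r}>\mathbf{0}$ define $$\mathrm{SINR}_{ij}(\mathbf{x},\mathbf{p})=\frac{p_i g_{ij}}{\sum_{k\ne i} p_k g_{kj} x_k+\sigma^2},\qquad f_i(\mathbf{x};\mathbf{r},\mathbf{p})=\sum_{j\in\mathcal{J}_i}\frac{r_{ij}}{\log(1+\mathrm{SINR}_{ij}(\mathbf{x},\mathbf{p}))}.$$ Fix a satisfiable rate vector $\mathbf{r}>\mathbf{0}$. If the full load $\mathbf{x}=\mathbf{1}$ is not implementable (for $\mathbf{r}$), then there is no other load $\mathbf{x}\le\mathbf{1}$ with $\mathbf{x}\ne\mathbf{1}$ that is implementable (for $\mathbf{r}$). Consequently, if full load is not implementable for the rate vector $\mathbf{d}_{\min}$, there is no feasible solution for Problem P0: $$\min_{\mathbf{p}>\mathbf{0},\ \mathbf{r}>\mathbf{0},\ \mathbf{0}<\mathbf{x}\le\mathbf{1}} \mathbf{x}^T\mathbf{p}\quad\text{s.t.}\quad \mathbf{x}=\mathbf{f}(\mathbf{x};\mathbf{r},\mathbf{p}),\quad \mathbf{r}\ge\mathbf{d}_{\min},$$ where $\mathbf{d}_{\min}>\mathbf{0}$ is given.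
   Context: Vector inequalities are componentwise; $\log$ is the natural logarithm. A rate vector $\mathbf{r}$ is satisfiable if $\rho(\mathbf{\Lambda}(\mathbf{r}))<1$, where $\rho$ denotes spectral radius and $\mathbf{\Lambda}(\mathbf{r})$ is the $n\times n$ matrix with entries $\lambda_{ii}=0$ and $\lambda_{ik}=\sum_{j\in\mathcal{J}_i} g_{kj}r_{ij}/g_{ij}$ for $i\ne k$. Given a satisfiable $\mathbf{r}$, a load vector $\mathbf{x}>\mathbf{0}$ is implementable if there exists a power vector $\mathbf{p}>\mathbf{0}$ such that $\mathbf{x}=\mathbf{f}(\mathbf{x};\mathbf{r},\mathbf{p})$. *)

From HB Require Import structures.
From mathcomp Require Import all_boot all_order all_algebra.
From mathcomp Require Import reals exp.
From mathcomp.real_closed Require Import complex.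
Set Implicit Arguments. Unset Strict Implicit. Unset Printing Implicit Defensive.
Import Order.TTheory GRing.Theory Num.Theory.
Local Open Scope ring_scope.

(* Conventions.
   - Base stations N = {1..n} are 'I_n; vectors over N are functions 'I_n -> R.
   - Users form a finite type U; serv j : 'I_n is the base station serving
     user j, so J_i = [set j | serv j == i].  The J_i are pairwise disjoint by
     construction; nonemptiness of each J_i is a hypothesis of the theorem.
   - Since every user belongs to exactly one J_i, the rate r_{ij} (j in J_i)
     is represented as r j, with r : U -> R.
   - g k j : channel gain from base station k to user j; sigma2 : noise power.
   - log is the natural logarithm [ln]. *)

Section Model.
Variables (R : realType) (n : nat) (U : finType).
Variables (serv : U -> 'I_n) (g : 'I_n -> U -> R) (sigma2 : R).

Definition SINR (x p : 'I_n -> R) (i : 'I_n) (j : U) : R :=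
  p i * g i j / (\sum_(k < n | k != i) p k * g k j * x k + sigma2).

Definition fload (x : 'I_n -> R) (r : U -> R) (p : 'I_n -> R) (i : 'I_n) : R :=
  \sum_(j | serv j == i) r j / ln (1 + SINR x p i j).

Definition Lambda (r : U -> R) : 'M[R]_n :=
  \matrix_(i, k) (if i == k then 0
                  else \sum_(j | serv j == i) g k j * r j / g i j).

Definition spectral_radius_lt1 (A : 'M[R]_n) : Prop :=
  forall z : R[i], eigenvalue (map_mx (real_complex R) A) z -> `|z| < 1.

Definition satisfiable (r : U -> R) : Prop := spectral_radius_lt1 (Lambda r).

Definition implementable (x : 'I_n -> R) (r : U -> R) : Prop :=
  (forall i, 0 < x i) /\
  exists p : 'I_n -> R, (forall i, 0 < p i) /\ (forall i, x i = fload x r p i).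

Definition P0_feasible (dmin : U -> R) (p : 'I_n -> R) (r : U -> R)
    (x : 'I_n -> R) : Prop :=
  [/\ forall i, 0 < p i, forall j, 0 < r j,
      forall i, 0 < x i /\ x i <= 1,
      forall i, x i = fload x r p i
    & forall j, dmin j <= r j].
End Model.

From HB Require Import structures.
From mathcomp Require Import all_boot all_order all_algebra.
From mathcomp Require Import reals exp.
From mathcomp.real_closed Require Import complex.
From mathcomp Require Import interval_inference ring lra.
From mathcomp Require Import boolp classical_sets topology normedtype convex.
Import Order.TTheory GRing.Theory Num.Theory.
Import numFieldTopology.Exports numFieldNormedType.Exports.
Local Open Scope ring_scope.

(* Scaling the powers by the load, q := p x, turns an implementable load x <= 1
   into a power vector that over-provisions full load: at full load the SINR of
   user j in cell i becomes x_i SINR_ij(x, p), and by concavity of ln,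
   x_i ln (1 + s) <= ln (1 + x_i s), so f_i(1; r, q) <= f_i(x; r, p) / x_i = 1.
   Such a supersolution yields a solution of f(1; r, a) = 1.  The load of
   cell i at full load decreases strictly in its own power and increases in
   the others', so the best response (the own power making that load 1, found
   by the intermediate value theorem) is monotone on the box [0, q], and
   Knaster-Tarski gives a fixed point. *)

Lemma mul_ln1D_le (R : realType) (x s : R) : 0 <= x <= 1 -> 0 <= s ->
  x * ln (1 + s) <= ln (1 + x * s).
Proof.
move=> /andP[x0 x1] s0.
have := @concave_ln R (Itv01 x0 x1) (1 + s) 1 (ltr_wpDr s0 ltr01) ltr01.
rewrite !convRE /= ln1 mulr0 addr0 /unstable.onem => /le_trans; apply.
by rewrite (_ : x * (1 + s) + (1 - x) * 1 = 1 + x * s) //; ring.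
Qed.

Section RateOverLog.
Context {R : realType}.
Implicit Types a u v c t : R.

Lemma ln1D_gt0 u : 0 < u -> 0 < ln (1 + u).
Proof. by move=> u0; rewrite ln_gt0 // ltrDl. Qed.

Lemma ltr_div_ln1D a u v : 0 < a -> 0 < u -> u < v ->
  a / ln (1 + v) < a / ln (1 + u).
Proof.
move=> a0 u0 uv; have lnu0 := ln1D_gt0 _ u0.
have lnuv : ln (1 + u) < ln (1 + v) by rewrite ltr_ln ?posrE ?ltrD2l //; lra.
by rewrite ltr_pM2l // ltf_pV2 ?posrE // (lt_trans lnu0).
Qed.

Lemma ler_div_ln1D a u v : 0 <= a -> 0 < u -> u <= v ->
  a / ln (1 + v) <= a / ln (1 + u).
Proof.
move=> a0 u0 uv; have lnu0 := ln1D_gt0 _ u0.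
have lnuv : ln (1 + u) <= ln (1 + v) by rewrite ler_ln ?posrE ?lerD2l //; lra.
by rewrite ler_wpM2l // lef_pV2 ?posrE // (lt_le_trans lnu0).
Qed.

Lemma div_ln1D_ge1 a u : 0 < u -> u <= a -> 1 <= a / ln (1 + u).
Proof.
move=> u0 ua; rewrite ler_pdivlMr ?ln1D_gt0 // mul1r.
by apply: le_trans (le_ln1Dx _) ua; lra.
Qed.

Lemma continuous_div_ln1D a c t : 0 < c -> 0 < t ->
  {for t, continuous (fun s : R => a / ln (1 + s * c))}.
Proof.
move=> c0 t0; apply: continuousM; first exact: cvg_cst.
apply: continuousV; first by rewrite gt_eqF // ln1D_gt0 // mulr_gt0.
apply: (@continuous_comp _ _ _ (fun s : R => 1 + s * c) (@ln R)).
  apply: continuousD; first exact: cvg_cst.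
  by apply: continuousM; [exact: cvg_id | exact: cvg_cst].
by apply: continuous_ln; rewrite ltr_wpDr ?mulr_ge0 // ltW.
Qed.

End RateOverLog.

Section BoxFixedPoint.
Context {R : realType} {I : Type}.
Variables lo hi : I -> R.

Definition in_box (p : I -> R) := forall i, lo i <= p i <= hi i.

Variable T : (I -> R) -> I -> R.
Hypothesis lo_le_hi : forall i, lo i <= hi i.
Hypothesis T_box : forall p, in_box p -> in_box (T p).
Hypothesis T_homo : forall p q, in_box p -> in_box q ->
  (forall i, p i <= q i) -> forall i, T p i <= T q i.

(* The pointwise infimum of the post-fixed points is a fixed point. *)
Lemma box_fixed_point : exists2 a, in_box a & T a = a.
Proof.
pose Q p := in_box p /\ forall i, T p i <= p i.
pose a i := inf [set p i | p in Q].
have hi_box : in_box hi by move=> i; rewrite lo_le_hi lexx.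
have hiQ : Q hi by split=> // i; case/andP: (T_box _ hi_box i).
have E_ne i : nonempty [set p i | p in Q] by exists (hi i), hi.
have E_lb i : lbound [set p i | p in Q] (lo i).
  by move=> _ [p [p_box _] <-]; case/andP: (p_box i).
have a_le p : Q p -> forall i, a i <= p i.
  by move=> Qp i; apply: ge_inf; [exists (lo i); exact: E_lb | exists p].
have a_box : in_box a by move=> i; rewrite lb_le_inf //= (a_le hi).
have Ta_le i : T a i <= a i.
  apply: lb_le_inf => // _ [p [p_box Tp_le] <-].
  apply: le_trans (Tp_le i).
  exact: T_homo a_box p_box (a_le p (conj p_box Tp_le)) i.
have TaQ : Q (T a).
  by split; [exact: T_box | exact: T_homo (T_box _ a_box) a_box Ta_le].
exists a => //; apply: funext => i; apply/eqP.
by rewrite eq_le Ta_le a_le.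
Qed.

End BoxFixedPoint.

Section Model.
Variables (R : realType) (n : nat) (U : finType).
Variables (serv : U -> 'I_n) (g : 'I_n -> U -> R) (sigma2 : R).
Hypothesis g_gt0 : forall k j, 0 < g k j.
Hypothesis sigma2_gt0 : 0 < sigma2.
Hypothesis cell_nonempty : forall i, exists j, serv j = i.

Lemma SINR_gt0 x p i j : (forall k, 0 <= x k) -> (forall k, 0 < p k) ->
  0 < SINR g sigma2 x p i j.
Proof.
move=> x_ge0 p_gt0; rewrite divr_gt0 ?mulr_gt0 // ltr_wpDl //.
by apply: sumr_ge0 => k _; rewrite !mulr_ge0 // ltW.
Qed.

Lemma SINR_full_load x p i j :
  SINR g sigma2 (fun _ => 1) (fun k => p k * x k) i j
  = x i * SINR g sigma2 x p i j.
Proof.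
rewrite /SINR mulrA; congr (_ / (_ + _)); first by rewrite mulrAC mulrC.
by apply: eq_bigr => k _; rewrite mulr1 mulrAC.
Qed.

Lemma fload_full_load_le1 x p r d :
  (forall k, 0 < x k <= 1) -> (forall k, 0 < p k) -> (forall j, 0 < d j <= r j) ->
  (forall k, x k = fload serv g sigma2 x r p k) ->
  forall i, fload serv g sigma2 (fun _ => 1) d (fun k => p k * x k) i <= 1.
Proof.
move=> x01 p_gt0 d_le_r x_fix i.
have x_ge0 k : 0 <= x k by case/andP: (x01 k) => /ltW.
have /andP[xi_gt0 xi_le1] := x01 i.
apply: (@le_trans _ _ (fload serv g sigma2 x r p i / x i)); last first.
  by rewrite -x_fix divff // gt_eqF.
rewrite /fload mulr_suml; apply: ler_sum => j _; rewrite SINR_full_load.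
have : 0 < SINR g sigma2 x p i j by exact: SINR_gt0.
set s := SINR _ _ _ _ _ _ => s_gt0.
have /andP[dj_gt0 dj_le] := d_le_r j.
have ln_s_gt0 : 0 < ln (1 + s) := ln1D_gt0 _ s_gt0.
apply: (@le_trans _ _ (d j / (x i * ln (1 + s)))).
  apply: ler_wpM2l; first exact: ltW.
  rewrite lef_pV2 ?posrE ?(mulr_gt0 xi_gt0) ?ln1D_gt0 ?(mulr_gt0 xi_gt0) //.
  by apply: mul_ln1D_le; rewrite ?(ltW xi_gt0) ?xi_le1 ?(ltW s_gt0).
rewrite [x i * _]mulrC invfM mulrA.
by rewrite !ler_pM2r ?invr_gt0.
Qed.

Section FullLoad.
Variable r : U -> R.
Hypothesis r_gt0 : forall j, 0 < r j.

Definition interf (p : 'I_n -> R) (i : 'I_n) (j : U) : R :=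
  \sum_(k < n | k != i) p k * g k j + sigma2.

Definition cell_load (p : 'I_n -> R) (i : 'I_n) (t : R) : R :=
  fload serv g sigma2 (fun _ => 1) r (dfwith (i := i) p t) i.

Lemma cell_loadE p i t : cell_load p i t =
  \sum_(j | serv j == i) r j / ln (1 + t * (g i j / interf p i j)).
Proof.
apply: eq_bigr => j _; rewrite /SINR dfwith_in mulrA /interf.
congr (_ / ln (1 + _ / (_ + _))); apply: eq_bigr => k ki.
by rewrite dfwith_out 1?eq_sym // mulr1.
Qed.

Lemma cell_load_self p i :
  cell_load p i (p i) = fload serv g sigma2 (fun _ => 1) r p i.
Proof.
rewrite /cell_load (_ : dfwith (i := i) p (p i) = p) //.
by apply: funext => k; case: dfwithP.
Qed.

Lemma interf_ge p i j : (forall k, 0 <= p k) -> sigma2 <= interf p i j.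
Proof.
by move=> p_ge0; rewrite lerDr; apply: sumr_ge0 => k _; rewrite mulr_ge0 // ltW.
Qed.

Lemma interf_homo p q i j :
  (forall k, p k <= q k) -> interf p i j <= interf q i j.
Proof.
by move=> p_le_q; rewrite lerD2r; apply: ler_sum => k _; rewrite ler_pM2r.
Qed.

Lemma interf_gt0 p i j : (forall k, 0 <= p k) -> 0 < interf p i j.
Proof. by move=> p_ge0; rewrite (lt_le_trans sigma2_gt0) ?interf_ge. Qed.

Lemma gain_interf_gt0 p i j : (forall k, 0 <= p k) -> 0 < g i j / interf p i j.
Proof. by move=> p_ge0; rewrite divr_gt0 ?interf_gt0. Qed.

Lemma cell_load_decr p i t1 t2 : (forall k, 0 <= p k) -> 0 < t1 -> t1 < t2 ->
  cell_load p i t2 < cell_load p i t1.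
Proof.
move=> p_ge0 t1_gt0 t12; rewrite !cell_loadE; apply: ltr_sum => [|j _].
  have [j0 <-] := cell_nonempty i.
  by apply/hasP; exists j0; rewrite ?mem_index_enum.
have c_gt0 := gain_interf_gt0 p i j p_ge0.
by apply: ltr_div_ln1D; rewrite ?r_gt0 ?(mulr_gt0 t1_gt0) ?ltr_pM2r.
Qed.

Lemma cell_load_homo p q i t : (forall k, 0 <= p k) -> (forall k, p k <= q k) ->
  0 < t -> cell_load p i t <= cell_load q i t.
Proof.
move=> p_ge0 p_le_q t_gt0; rewrite !cell_loadE; apply: ler_sum => j _.
have q_ge0 k : 0 <= q k by apply: le_trans (p_le_q k).
apply: ler_div_ln1D; first exact: ltW.
  by rewrite mulr_gt0 ?gain_interf_gt0.
by rewrite ler_pM2l // ler_pM2l // lef_pV2 ?posrE ?interf_gt0 ?interf_homo.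
Qed.

Lemma continuous_cell_load p i t : (forall k, 0 <= p k) -> 0 < t ->
  {for t, continuous (cell_load p i)}.
Proof.
move=> p_ge0 t_gt0; have -> : cell_load p i =
    fun s => \sum_(j | serv j == i) r j / ln (1 + s * (g i j / interf p i j)).
  by apply: funext => s; rewrite cell_loadE.
apply: cvg_big => [|j _]; first exact: add_continuous.
exact: continuous_div_ln1D (gain_interf_gt0 p i j p_ge0) t_gt0.
Qed.

Lemma cell_load_ge1 p i t : (forall k, 0 <= p k) -> 0 < t ->
  (forall j, serv j = i -> t <= r j * sigma2 / g i j) -> 1 <= cell_load p i t.
Proof.
move=> p_ge0 t_gt0 t_small; rewrite cell_loadE.
have [j0 j0i] := cell_nonempty i; rewrite (bigD1 j0) /=; last exact/eqP.
apply: ler_wpDr.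
  apply: sumr_ge0 => j _; rewrite divr_ge0 ?ltW ?ln1D_gt0 //.
  by rewrite mulr_gt0 ?gain_interf_gt0.
apply: div_ln1D_ge1; first by rewrite mulr_gt0 ?gain_interf_gt0.
have := t_small j0 j0i; rewrite ler_pdivlMr // => tg_le.
have sigma2_le := interf_ge p i j0 p_ge0.
rewrite mulrA ler_pdivrMr ?interf_gt0 //.
by apply: le_trans tg_le _; rewrite ler_pM2l.
Qed.

Section BestResponse.
Variable q : 'I_n -> R.
Hypothesis q_gt0 : forall i, 0 < q i.
Hypothesis q_load_le1 : forall i, fload serv g sigma2 (fun _ => 1) r q i <= 1.

Local Notation in_power_box := (in_box (fun _ => 0) q).

Lemma in_power_box_ge0 p : in_power_box p -> forall k, 0 <= p k.
Proof. by move=> p_box k; case/andP: (p_box k). Qed.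

Lemma best_response_exists p i : in_power_box p ->
  exists t, 0 < t <= q i /\ cell_load p i t = 1.
Proof.
move=> p_box; have p_ge0 := in_power_box_ge0 _ p_box.
(* Below power e the SINR of every user of cell i is at most its rate, so
   ln (1 + u) <= u makes the load of cell i at least 1. *)
pose e := \big[Num.min/q i]_j (r j * sigma2 / g i j).
have e_gt0 : 0 < e.
  by apply: lt_bigmin => // j _; rewrite !(divr_gt0, mulr_gt0).
have e_le_q : e <= q i by exact: bigmin_le_id.
have load_e : 1 <= cell_load p i e.
  by apply: cell_load_ge1 => // j _; apply: bigmin_le.
have load_q : cell_load p i (q i) <= 1.
  apply: le_trans (q_load_le1 i); rewrite -cell_load_self.
  apply: cell_load_homo => // k.
  by case/andP: (p_box k).
have [t t_in load_t] : exists2 t, t \in `[e, q i] & cell_load p i t = 1.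
  apply: IVT => //; last by rewrite ge_min le_max load_q load_e orbT.
  apply: continuous_in_subspaceT => t.
  rewrite inE /= in_itv /= => /andP[e_le_t _].
  by apply: continuous_cell_load => //; apply: lt_le_trans e_le_t.
move: t_in; rewrite in_itv /= => /andP[e_le_t t_le_q].
by exists t; rewrite t_le_q (lt_le_trans e_gt0).
Qed.

Definition best_response p i : R :=
  xget 0 (fun t => 0 < t <= q i /\ cell_load p i t = 1).

Lemma best_responseP p i : in_power_box p ->
  0 < best_response p i <= q i /\ cell_load p i (best_response p i) = 1.
Proof. by move=> p_box; exact: xgetPex (best_response_exists p i p_box). Qed.

Lemma best_response_box p : in_power_box p -> in_power_box (best_response p).
Proof.
move=> p_box i; have [/andP[br_gt0 ->] _] := best_responseP p i p_box.
by rewrite ltW.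
Qed.

Lemma best_response_homo p p' : in_power_box p -> in_power_box p' ->
  (forall k, p k <= p' k) -> forall i, best_response p i <= best_response p' i.
Proof.
move=> p_box p'_box p_le_p' i; rewrite leNgt; apply/negP => br_lt.
have [_ load_p] := best_responseP p i p_box.
have [/andP[br'_gt0 _] load_p'] := best_responseP p' i p'_box.
have p_ge0 := in_power_box_ge0 _ p_box.
have : cell_load p i (best_response p i) < cell_load p i (best_response p' i).
  exact: cell_load_decr.
have : cell_load p i (best_response p' i) <= cell_load p' i (best_response p' i).
  exact: cell_load_homo.
by rewrite load_p load_p'; lra.
Qed.

Lemma implementable_full_load : implementable serv g sigma2 (fun _ => 1) r.
Proof.
have q_ge0 i : 0 <= q i by apply: ltW.
have [a a_box a_fix] := @box_fixed_point _ _ (fun _ => 0) q best_response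
  q_ge0 best_response_box best_response_homo.
split=> //; exists a; split=> i.
  by rewrite -a_fix; have [/andP[] ] := best_responseP a i a_box.
by have [_] := best_responseP a i a_box; rewrite a_fix cell_load_self.
Qed.

End BestResponse.
End FullLoad.

Lemma implementable_full_load_of_solution x p r d :
  (forall k, 0 < x k <= 1) -> (forall k, 0 < p k) -> (forall j, 0 < d j <= r j) ->
  (forall k, x k = fload serv g sigma2 x r p k) ->
  implementable serv g sigma2 (fun _ => 1) d.
Proof.
move=> x01 p_gt0 d_le_r x_fix.
apply: (@implementable_full_load d _ (fun k => p k * x k)).
- by move=> j; case/andP: (d_le_r j).
- by move=> k; case/andP: (x01 k) => x_gt0 _; rewrite mulr_gt0.
- exact: fload_full_load_le1.
Qed.

End Model.

Arguments implementable_full_load_of_solution {R n U serv g sigma2}.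

Theorem corollary1 (R : realType) (n : nat) (U : finType)
  (serv : U -> 'I_n) (g : 'I_n -> U -> R) (sigma2 : R)
  (Hnonempty : forall i : 'I_n, exists j : U, serv j = i)
  (Hg : forall (k : 'I_n) (j : U), 0 < g k j)
  (Hsigma : 0 < sigma2) :
  (forall r : U -> R, (forall j, 0 < r j) -> satisfiable serv g r ->
     ~ implementable serv g sigma2 (fun _ => 1) r ->
     forall x : 'I_n -> R, (forall i, x i <= 1) -> x <> (fun _ => 1) ->
       ~ implementable serv g sigma2 x r)
  /\
  (forall dmin : U -> R, (forall j, 0 < dmin j) -> satisfiable serv g dmin ->
     ~ implementable serv g sigma2 (fun _ => 1) dmin ->
     ~ exists (p : 'I_n -> R) (r : U -> R) (x : 'I_n -> R),
         P0_feasible serv g sigma2 dmin p r x).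
Proof.
have full_load := implementable_full_load_of_solution Hg Hsigma Hnonempty.
split.
  move=> r r_gt0 _ not_full x x_le1 _ [x_gt0 [p [p_gt0 x_fix]]]; apply: not_full.
  apply: (full_load x p r) => // [k | j]; first by rewrite x_gt0 x_le1.
  by rewrite r_gt0 lexx.
move=> d d_gt0 _ not_full [p [r [x [p_gt0 r_gt0 x01 x_fix d_le_r]]]].
apply: not_full; apply: (full_load x p r) => // [k | j].
  by have [-> ->] := x01 k.
by rewrite d_gt0 d_le_r.
Qed.
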